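(* There exists a topological dynamical system $(X,T)$, with $X$ containing at least two points, such that the whole space $X$ is a Banach scrambled set.
   Context: A topological dynamical system $(X,T)$ consists of a non-empty compact metric space $(X,d)$ and a continuous map $T:X\to X$. $\mathbb{Z}_+$ denotes the non-negative integers. A set $F\subset\mathbb{Z}_+$ has Banach density one if for every $\lambda<1$ there is $N\ge1$ such that $\#(F\cap I)\ge\lambda\,\#(I)$ for every interval $I\subset\mathbb{Z}_+$ of integers with $\#(I)\ge N$. A pair $(x,y)\in X^2$ is Banach proximal if for every $\varepsilon>0$ the set $\{n\in\mathbb{Z}_+: d(T^nx,T^ny)<\varepsilon\}$ has Banach density one. A pair is asymptotic if $\lim_{n\to\infty}d(T^nx,T^ny)=0$. A subset $S\subset X$ with at least two points is Banach scrambled if every pair of distinct points $x,y\in S$ is Banach proximal but not asymptotic. *)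

From Stdlib Require Import Reals List ClassicalEpsilon.
Open Scope R_scope.

Definition is_metric {X : Type} (d : X -> X -> R) : Prop :=
  (forall x y, 0 <= d x y) /\
  (forall x y, d x y = 0 <-> x = y) /\
  (forall x y, d x y = d y x) /\
  (forall x y z, d x z <= d x y + d y z).

Definition is_open {X : Type} (d : X -> X -> R) (U : X -> Prop) : Prop :=
  forall x, U x -> exists r, 0 < r /\ forall y, d x y < r -> U y.

Definition is_compact {X : Type} (d : X -> X -> R) : Prop :=
  forall (I : Type) (U : I -> X -> Prop),
    (forall i, is_open d (U i)) ->
    (forall x, exists i, U i x) ->
    exists l : list I, forall x, exists i, In i l /\ U i x.

Definition is_continuous {X : Type} (d : X -> X -> R) (T : X -> X) : Prop :=
  forall x eps, 0 < eps -> exists delta, 0 < delta /\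
    forall y, d x y < delta -> d (T x) (T y) < eps.

Definition is_TDS {X : Type} (d : X -> X -> R) (T : X -> X) : Prop :=
  inhabited X /\ is_metric d /\ is_compact d /\ is_continuous d T.

Fixpoint count_in (F : nat -> Prop) (a L : nat) : nat :=
  match L with
  | O => O
  | S L' => (if excluded_middle_informative (F (a + L')%nat) then 1 else 0)
            + count_in F a L'
  end%nat.

(* F has Banach density one. Intervals of integers in Z_+ are
   {a, ..., a+L-1}, of cardinality L. *)
Definition banach_density_one (F : nat -> Prop) : Prop :=
  forall lam : R, lam < 1 ->
    exists N : nat, (1 <= N)%nat /\
      forall a L : nat, (N <= L)%nat -> INR (count_in F a L) >= lam * INR L.

Definition banach_proximal {X : Type} (d : X -> X -> R) (T : X -> X) (x y : X)
  : Prop :=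
  forall eps, 0 < eps ->
    banach_density_one (fun n => d (Nat.iter n T x) (Nat.iter n T y) < eps).

Definition asymptotic {X : Type} (d : X -> X -> R) (T : X -> X) (x y : X)
  : Prop :=
  forall eps, 0 < eps -> exists M : nat, forall n : nat, (M <= n)%nat ->
    d (Nat.iter n T x) (Nat.iter n T y) < eps.

Definition banach_scrambled {X : Type} (d : X -> X -> R) (T : X -> X)
  (S : X -> Prop) : Prop :=
  (exists x y, S x /\ S y /\ x <> y) /\
  (forall x y, S x -> S y -> x <> y ->
     banach_proximal d T x y /\ ~ asymptotic d T x y).

From Stdlib Require Import Reals Arith Lia Lra List.
From Stdlib Require Import Classical ClassicalEpsilon.
From Stdlib Require ConstructiveEpsilon.
From Stdlib Require Import FunctionalExtensionality ProofIrrelevance.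
Import ListNotations.
Open Scope R_scope.
Local Open Scope nat_scope.

(** X is a closed shift-invariant subset of the sequence space over the
   alphabet nat + {oo} (the one-point compactification of nat), with the
   shift map.  Writing a_j = (j+1)!, a sequence is admissible when a symbol
   k forces k + 1 at every lag a_j with j >= k, when a symbol above k (or
   oo) is never followed by k + 1 at two consecutive lags a_j, a_(j+1), and
   when symbols below any K occur with Banach density zero at a fixed
   uniform rate.  Both the constant sequence oo and the sequence of
   factorial digit sums are admissible, so X has two points.
   Any two points are Banach proximal, because at most times both carry
   only large symbols on a long window; two distinct points are not
   asymptotic, because a coordinate where they differ propagates, via the
   forced increments, into infinitely many pairs of consecutive lags on
   which asymptoticity would violate the no-double-increment rule. *)

Lemma count_in_succ (F : nat -> Prop) (a L : nat) :
  count_in F a (S L) =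
  (if excluded_middle_informative (F (a + L)) then 1 else 0) + count_in F a L.
Proof. reflexivity. Qed.

Lemma count_in_ext (F G : nat -> Prop) (a b L : nat) :
  (forall i, i < L -> (F (a + i) <-> G (b + i))) ->
  count_in F a L = count_in G b L.
Proof.
  induction L as [|L IH]; intros H; [reflexivity|].
  rewrite !count_in_succ, IH by (intros; apply H; lia).
  specialize (H L (Nat.lt_succ_diag_r L)).
  destruct (excluded_middle_informative (F (a + L))),
    (excluded_middle_informative (G (b + L))); tauto.
Qed.

Lemma count_in_mono (F G : nat -> Prop) (a L : nat) :
  (forall i, i < L -> F (a + i) -> G (a + i)) ->
  count_in F a L <= count_in G a L.
Proof.
  induction L as [|L IH]; intros H; [reflexivity|].
  rewrite !count_in_succ. specialize (IH (fun i Hi => H i ltac:(lia))).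
  specialize (H L (Nat.lt_succ_diag_r L)).
  destruct (excluded_middle_informative (F (a + L))),
    (excluded_middle_informative (G (a + L))); tauto || lia.
Qed.

Lemma count_in_compl (F : nat -> Prop) (a L : nat) :
  count_in F a L + count_in (fun p => ~ F p) a L = L.
Proof.
  induction L as [|L IH]; [reflexivity|]. rewrite !count_in_succ.
  destruct (excluded_middle_informative (F (a + L))),
    (excluded_middle_informative (~ F (a + L))); tauto || lia.
Qed.

Lemma count_in_compl_INR (F : nat -> Prop) (a L : nat) :
  INR (count_in (fun p => ~ F p) a L) = (INR L - INR (count_in F a L))%R.
Proof. rewrite <- (count_in_compl F a L) at 2. rewrite plus_INR. lra. Qed.

Lemma count_in_or (F G : nat -> Prop) (a L : nat) :
  count_in (fun p => F p \/ G p) a L <= count_in F a L + count_in G a L.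
Proof.
  induction L as [|L IH]; [reflexivity|]. rewrite !count_in_succ.
  destruct (excluded_middle_informative (F (a + L) \/ G (a + L))),
    (excluded_middle_informative (F (a + L))),
    (excluded_middle_informative (G (a + L))); tauto || lia.
Qed.

Lemma count_in_app (F : nat -> Prop) (a L1 L2 : nat) :
  count_in F a (L1 + L2) = count_in F a L1 + count_in F (a + L1) L2.
Proof.
  induction L2 as [|L2 IH]; [rewrite Nat.add_0_r; simpl; lia|].
  rewrite Nat.add_succ_r, !count_in_succ.
  replace (a + (L1 + L2)) with (a + L1 + L2) by lia. lia.
Qed.

Lemma count_in_le (F : nat -> Prop) (a L : nat) : count_in F a L <= L.
Proof. pose proof (count_in_compl F a L). lia. Qed.

Lemma count_in_false (F : nat -> Prop) (a L : nat) :
  (forall p, ~ F p) -> count_in F a L = 0.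
Proof.
  intros H. induction L as [|L IH]; [reflexivity|].
  rewrite count_in_succ, IH. destruct excluded_middle_informative; firstorder.
Qed.

Lemma count_in_true (F : nat -> Prop) (a L : nat) :
  (forall p, F p) -> count_in F a L = L.
Proof.
  intros H. pose proof (count_in_compl F a L).
  rewrite (count_in_false (fun p => ~ F p)) in * by firstorder. lia.
Qed.

Lemma count_in_len_mono (F : nat -> Prop) (a L L' : nat) :
  L <= L' -> count_in F a L <= count_in F a L'.
Proof.
  intros H. replace L' with (L + (L' - L)) by lia. rewrite count_in_app. lia.
Qed.
Section PeriodicCount.
Variables (F : nat -> Prop) (M : nat).
Hypothesis F_periodic : forall n, F (n + M) <-> F n.

Lemma count_in_period_shift (a : nat) : count_in F a M = count_in F 0 M.
Proof.
  induction a as [|a IH]; [reflexivity|]. rewrite <- IH.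
  pose proof (count_in_app F a 1 M) as E1.
  pose proof (count_in_app F a M 1) as E2.
  assert (count_in F (a + M) 1 = count_in F a 1).
  { apply count_in_ext. intros i _. rewrite <- (F_periodic (a + i)).
    replace (a + M + i) with (a + i + M) by lia. tauto. }
  rewrite Nat.add_1_r in E1. rewrite Nat.add_comm in E2. lia.
Qed.

Lemma count_in_periods (q a : nat) : count_in F a (q * M) = q * count_in F 0 M.
Proof.
  revert a. induction q as [|q IH]; intros a; [reflexivity|].
  replace (S q * M) with (M + q * M) by lia.
  rewrite count_in_app, IH, count_in_period_shift. lia.
Qed.

Lemma count_in_periodic_bound (a L : nat) :
  0 < M -> count_in F a L <= (L / M + 1) * count_in F 0 M.
Proof.
  intros HM. rewrite <- (count_in_periods (L / M + 1) a).
  apply count_in_len_mono.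
  pose proof (Nat.div_mod_eq L M). pose proof (Nat.mod_upper_bound L M ltac:(lia)).
  nia.
Qed.
End PeriodicCount.

Lemma banach_density_one_compl (F : nat -> Prop) :
  (forall r, exists N, forall a L, N <= L -> r * count_in F a L <= L) ->
  banach_density_one (fun p => ~ F p).
Proof.
  intros Hsparse lam Hlam.
  destruct (INR_unbounded (/ (1 - lam))) as [r Hr].
  assert (Hr1 : (1 <= INR r * (1 - lam))%R).
  { apply (Rmult_lt_compat_r (1 - lam)) in Hr; [|lra].
    rewrite Rinv_l in Hr by lra. lra. }
  destruct (Hsparse r) as [N HN]. exists (S N). split; [lia|].
  intros a L HL. specialize (HN a L ltac:(lia)).
  rewrite count_in_compl_INR.
  apply le_INR in HN. rewrite mult_INR in HN.
  pose proof (pos_INR (count_in F a L)).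
  assert (INR (count_in F a L) <= INR (count_in F a L) * (INR r * (1 - lam)))%R
    by (rewrite <- (Rmult_1_r (INR (count_in F a L))) at 1; apply Rmult_le_compat_l; lra).
  nra.
Qed.
(** Digit sums in mixed radix (i+2, i+3, i+4, ...): every n is uniquely
   n = c_0 + (i+2) (c_1 + (i+3) (c_2 + ...)) with c_j < i + j + 2, and
   [digit_sum i n] is the sum of the c_j.  For i = 0 this is the factorial
   number system.  The definition recurses on a fuel which is at least n. *)
Fixpoint digit_sum_fuel (fuel i n : nat) : nat :=
  match fuel with
  | O => 0
  | S f => n mod (i + 2) + digit_sum_fuel f (S i) (n / (i + 2))
  end.

Definition digit_sum (i n : nat) : nat := digit_sum_fuel n i n.

(* [place i len] = (i+2)(i+3)...(i+len+1) is the value of the digit at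
   position len; [place 0 j] = (j+1)!. *)
Fixpoint place (i len : nat) : nat :=
  match len with O => 1 | S l => (i + 2) * place (S i) l end.

Lemma digit_sum_fuel_zero (f i : nat) : digit_sum_fuel f i 0 = 0.
Proof.
  revert i. induction f as [|f IH]; intros i; [reflexivity|]. simpl.
  rewrite Nat.Div0.mod_0_l, Nat.Div0.div_0_l, IH. reflexivity.
Qed.

Lemma digit_sum_fuel_enough (f g i n : nat) :
  n <= f -> n <= g -> digit_sum_fuel f i n = digit_sum_fuel g i n.
Proof.
  revert g i n. induction f as [|f IH]; intros g i n Hf Hg.
  - replace n with 0 by lia. rewrite !digit_sum_fuel_zero. reflexivity.
  - destruct g as [|g]; [replace n with 0 by lia; rewrite !digit_sum_fuel_zero; reflexivity|].
    simpl. f_equal. destruct n as [|n].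
    + rewrite Nat.Div0.div_0_l, !digit_sum_fuel_zero. reflexivity.
    + assert (S n / (i + 2) < S n) by (apply Nat.div_lt; lia).
      apply IH; lia.
Qed.

Lemma digit_sum_unfold (i n : nat) :
  digit_sum i n = n mod (i + 2) + digit_sum (S i) (n / (i + 2)).
Proof.
  unfold digit_sum. destruct n as [|n].
  { rewrite Nat.Div0.mod_0_l, Nat.Div0.div_0_l. reflexivity. }
  simpl digit_sum_fuel at 1. f_equal.
  assert (S n / (i + 2) < S n) by (apply Nat.div_lt; lia).
  apply digit_sum_fuel_enough; lia.
Qed.

Lemma digit_sum_cons (i c h : nat) :
  c < i + 2 -> digit_sum i (c + (i + 2) * h) = c + digit_sum (S i) h.
Proof.
  intros Hc. rewrite digit_sum_unfold.
  replace (c + (i + 2) * h) with (c + h * (i + 2)) by lia.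
  rewrite Nat.Div0.mod_add, Nat.div_add, Nat.mod_small, Nat.div_small by lia.
  reflexivity.
Qed.

Lemma lowest_digit_split (i m : nat) : exists c h, c < i + 2 /\ m = c + (i + 2) * h.
Proof.
  exists (m mod (i + 2)), (m / (i + 2)). split.
  - apply Nat.mod_upper_bound. lia.
  - pose proof (Nat.div_mod_eq m (i + 2)). lia.
Qed.

Lemma digit_sum_zero (i : nat) : digit_sum i 0 = 0.
Proof. reflexivity. Qed.

Lemma digit_sum_single (i q : nat) : q < i + 2 -> digit_sum i q = q.
Proof.
  intros Hq. replace q with (q + (i + 2) * 0) at 1 by lia.
  rewrite digit_sum_cons, digit_sum_zero by lia. lia.
Qed.

Lemma digit_sum_pos (i n : nat) : 0 < n -> 0 < digit_sum i n.
Proof.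
  revert i. induction n as [n IH] using (well_founded_induction lt_wf).
  intros i Hn. destruct (lowest_digit_split i n) as (c & h & Hc & ->).
  rewrite digit_sum_cons by lia. destruct c; [|lia].
  apply IH; lia.
Qed.

Lemma place_pos (len i : nat) : 1 <= place i len.
Proof.
  revert i. induction len as [|len IH]; intros i; simpl; [lia|].
  specialize (IH (S i)). lia.
Qed.

Lemma place_gt (len i : nat) : len < place i len.
Proof.
  revert i. induction len as [|len IH]; intros i; simpl; [lia|].
  specialize (IH (S i)). lia.
Qed.

Lemma place_succ (len i : nat) : place i (S len) = place i len * (i + len + 2).
Proof.
  revert i. induction len as [|len IH]; intros i; [simpl; lia|].
  change (place i (S (S len))) with ((i + 2) * place (S i) (S len)).
  rewrite IH. change (place i (S len)) with ((i + 2) * place (S i) len). lia.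
Qed.

Lemma digit_sum_block (R i r q : nat) :
  r < place i R -> digit_sum i (r + place i R * q) = digit_sum i r + digit_sum (i + R) q.
Proof.
  revert i r. induction R as [|R IH]; intros i r Hr.
  - simpl in *. replace r with 0 by lia. rewrite !Nat.add_0_r. reflexivity.
  - simpl place in *. destruct (lowest_digit_split i r) as (c & r' & Hc & ->).
    assert (r' < place (S i) R) by nia.
    replace (c + (i + 2) * r' + (i + 2) * place (S i) R * q)
      with (c + (i + 2) * (r' + place (S i) R * q)) by lia.
    rewrite !digit_sum_cons, IH by lia.
    replace (S i + R) with (i + S R) by lia. lia.
Qed.

(* Adding the place value of position len increases the digit sum by one,
   provided no carry is possible, which holds once the digit sum is at most
   i + len (each digit at position len or above is below its radix). *)
Lemma digit_sum_add_place (len i m : nat) :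
  digit_sum i m <= i + len -> digit_sum i (m + place i len) = digit_sum i m + 1.
Proof.
  revert i m. induction len as [|len IH]; intros i m H;
    destruct (lowest_digit_split i m) as (c & h & Hc & ->);
    rewrite digit_sum_cons in * by lia; simpl place.
  - replace (c + (i + 2) * h + 1) with ((c + 1) + (i + 2) * h) by lia.
    rewrite digit_sum_cons by lia. lia.
  - replace (c + (i + 2) * h + (i + 2) * place (S i) len)
      with (c + (i + 2) * (h + place (S i) len)) by lia.
    rewrite digit_sum_cons, IH by lia. lia.
Qed.

Lemma digit_sum_no_double (len i m k : nat) :
  k < digit_sum i m ->
  ~ (digit_sum i (m + place i len) = S k /\ digit_sum i (m + place i (S len)) = S k).
Proof.
  revert i m k. induction len as [|len IH]; intros i m k H [H1 H2];
    destruct (lowest_digit_split i m) as (c & h & Hc & ->);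
    rewrite digit_sum_cons in H by lia.
  - simpl place in *. destruct (Nat.eq_dec c (i + 1)) as [->|Hne].
    + replace (i + 1 + (i + 2) * h + 1) with (0 + (i + 2) * (h + 1)) in H1 by lia.
      replace (i + 1 + (i + 2) * h + (i + 2) * 1)
        with ((i + 1) + (i + 2) * (h + 1)) in H2 by lia.
      rewrite digit_sum_cons in H1, H2 by lia. lia.
    + replace (c + (i + 2) * h + 1) with ((c + 1) + (i + 2) * h) in H1 by lia.
      rewrite digit_sum_cons in H1 by lia. lia.
  - change (place i (S len)) with ((i + 2) * place (S i) len) in H1.
    change (place i (S (S len))) with ((i + 2) * place (S i) (S len)) in H2.
    replace (c + (i + 2) * h + (i + 2) * place (S i) len)
      with (c + (i + 2) * (h + place (S i) len)) in H1 by lia.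
    replace (c + (i + 2) * h + (i + 2) * place (S i) (S len))
      with (c + (i + 2) * (h + place (S i) (S len))) in H2 by lia.
    rewrite digit_sum_cons in H1, H2 by lia.
    assert (0 < digit_sum (S i) (h + place (S i) len))
      by (apply digit_sum_pos; pose proof (place_pos len (S i)); lia).
    apply (IH (S i) h (k - c)); [lia|]. split; lia.
Qed.
(** Small factorial digit sums have Banach density zero. *)

Lemma place_beats_geometric (c B : nat) : exists R, B * c ^ R <= place 0 R.
Proof.
  assert (Hgeom : forall t, (2 * c) ^ t <= place 0 (2 * c + t)).
  { induction t as [|t IH].
    - rewrite Nat.add_0_r. apply place_pos.
    - rewrite Nat.add_succ_r, place_succ, Nat.pow_succ_r'. nia. }
  set (t := B * c ^ (2 * c)). exists (2 * c + t).
  specialize (Hgeom t). rewrite Nat.pow_mul_l in Hgeom. rewrite Nat.pow_add_r.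
  assert (t < 2 ^ t) by (apply Nat.pow_gt_lin_r; lia).
  fold t in Hgeom |- *. nia.
Qed.

(* Among the first place 0 R integers, at most (K+1)^R have digit sum <= K:
   the top digit q of a number below place 0 (R+1) adds q to the digit sum. *)
Lemma count_small_digit_sum (R K : nat) :
  count_in (fun r => digit_sum 0 r <= K) 0 (place 0 R) <= (K + 1) ^ R.
Proof.
  induction R as [|R IH].
  - apply (count_in_le _ 0 1).
  - set (C := count_in (fun r => digit_sum 0 r <= K) 0 (place 0 R)) in IH.
    assert (Hblocks : forall Q, Q <= R + 2 ->
      count_in (fun r => digit_sum 0 r <= K) 0 (Q * place 0 R) <= Nat.min Q (K + 1) * C).
    { induction Q as [|Q IHQ]; intros HQ; [simpl; lia|].
      replace (S Q * place 0 R) with (Q * place 0 R + place 0 R) by lia.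
      rewrite count_in_app. simpl (0 + _).
      assert (Hshift : count_in (fun r => digit_sum 0 r <= K) (Q * place 0 R) (place 0 R)
                     = count_in (fun r => digit_sum 0 r + Q <= K) 0 (place 0 R)).
      { apply count_in_ext. intros i Hi.
        replace (Q * place 0 R + i) with (i + place 0 R * Q) by lia.
        rewrite digit_sum_block, (digit_sum_single (0 + R) Q) by lia. tauto. }
      rewrite Hshift. specialize (IHQ ltac:(lia)).
      destruct (le_lt_dec Q K).
      - assert (count_in (fun r => digit_sum 0 r + Q <= K) 0 (place 0 R) <= C)
          by (apply count_in_mono; intros; lia).
        nia.
      - rewrite (count_in_false (fun r => digit_sum 0 r + Q <= K)) by (intros; lia). lia. }
    rewrite place_succ. replace (place 0 R * (0 + R + 2)) with ((R + 2) * place 0 R) by lia.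
    rewrite Hblocks, Nat.pow_succ_r' by lia. nia.
Qed.

(* Digit sums below K meet every window of length L at most
   (L / place 0 R + 1) (K+1)^R times, since digit_sum 0 p >= digit_sum 0 of
   p modulo place 0 R. *)
Lemma count_small_digit_sum_window (R K a L : nat) :
  count_in (fun p => digit_sum 0 p < K) a L <= (L / place 0 R + 1) * (K + 1) ^ R.
Proof.
  set (M := place 0 R). assert (HM : 0 < M) by (pose proof (place_pos R 0); lia).
  transitivity (count_in (fun p => digit_sum 0 (p mod M) <= K) a L).
  { apply count_in_mono. intros i _ H.
    pose proof (Nat.div_mod_eq (a + i) M). pose proof (Nat.mod_upper_bound (a + i) M ltac:(lia)).
    assert (digit_sum 0 (a + i) = digit_sum 0 ((a + i) mod M) + digit_sum (0 + R) ((a + i) / M)).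
    { rewrite <- digit_sum_block by (unfold M in *; lia). f_equal. unfold M in *. lia. }
    lia. }
  transitivity ((L / M + 1) * count_in (fun p => digit_sum 0 (p mod M) <= K) 0 M).
  { apply count_in_periodic_bound; [|exact HM].
    intros n. rewrite <- (Nat.mul_1_l M) at 1. rewrite Nat.Div0.mod_add. tauto. }
  apply Nat.mul_le_mono_l. rewrite <- (count_small_digit_sum R K).
  apply Nat.eq_le_incl, count_in_ext. intros i Hi. rewrite Nat.mod_small by lia. tauto.
Qed.

(* Taking R with 2 r (K+1)^R <= (R+1)!, windows of length at least (R+1)!
   contain at most a 1/r share of digit sums below K. *)
Lemma large_digit_sum_density_one (K : nat) :
  banach_density_one (fun p => ~ digit_sum 0 p < K).
Proof.
  apply banach_density_one_compl. intros r.
  destruct (place_beats_geometric (K + 1) (2 * r)) as [R HR].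
  exists (place 0 R). intros a L HL.
  pose proof (count_small_digit_sum_window R K a L).
  assert (1 <= L / place 0 R).
  { rewrite <- (Nat.div_same (place 0 R)) by (pose proof (place_pos R 0); lia).
    apply Nat.Div0.div_le_mono. exact HL. }
  assert (place 0 R * (L / place 0 R) <= L) by apply Nat.Div0.mul_div_le.
  nia.
Qed.
(** The sequence space over the one-point compactification of nat.
   A point is s : nat -> option nat, where None stands for the symbol oo.
   At resolution n a symbol is seen through [trunc n], which identifies all
   symbols >= n with oo; [agree n s s'] says that the first n coordinates of
   s and s' look alike at resolution n.  The distance is 2^-N for the least
   N with ~ agree N s s'; this is an ultrametric. *)
Definition seq_space : Type := nat -> option nat.

Definition trunc (n : nat) (o : option nat) : nat :=
  match o with None => n | Some k => Nat.min k n end.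

Definition agree (n : nat) (s s' : seq_space) : Prop :=
  forall m, m < n -> trunc n (s m) = trunc n (s' m).

Lemma trunc_le (n : nat) (o : option nat) : trunc n o <= n.
Proof. destruct o; simpl; lia. Qed.

Lemma trunc_trunc (m n : nat) (o : option nat) : m <= n -> trunc m o = Nat.min (trunc n o) m.
Proof. destruct o; simpl; lia. Qed.

Lemma trunc_eq_small (n k : nat) (o o' : option nat) :
  trunc n o = trunc n o' -> o = Some k -> k < n -> o' = Some k.
Proof. intros H -> Hk. destruct o'; simpl in H; [f_equal|]; lia. Qed.

Lemma trunc_large (n : nat) (o : option nat) :
  (forall k, o = Some k -> n <= k) -> trunc n o = n.
Proof. destruct o as [k|]; simpl; [|reflexivity]. intros H. specialize (H k eq_refl). lia. Qed.

Lemma agree_mono (m n : nat) (s s' : seq_space) : agree n s s' -> m <= n -> agree m s s'.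
Proof.
  intros H Hm k Hk. rewrite (trunc_trunc m n (s k)), (trunc_trunc m n (s' k)), H by lia.
  reflexivity.
Qed.

Lemma agree_sym (n : nat) (s s' : seq_space) : agree n s s' -> agree n s' s.
Proof. intros H k Hk. symmetry. auto. Qed.

Lemma agree_trans (n : nat) (s1 s2 s3 : seq_space) :
  agree n s1 s2 -> agree n s2 s3 -> agree n s1 s3.
Proof. intros H1 H2 k Hk. rewrite H1 by exact Hk. auto. Qed.

Lemma agree_zero (s s' : seq_space) : agree 0 s s'.
Proof. intros k Hk. lia. Qed.

Lemma agree_symbol (n m k : nat) (s s' : seq_space) :
  agree n s s' -> m < n -> k < n -> (s m = Some k <-> s' m = Some k).
Proof.
  intros H Hm Hk. split; intros E.
  - apply (trunc_eq_small n k (s m)); auto.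
  - apply (trunc_eq_small n k (s' m)); auto. symmetry. auto.
Qed.

Lemma agree_everywhere_eq (s s' : seq_space) : (forall n, agree n s s') -> s = s'.
Proof.
  intros H. apply functional_extensionality. intros m.
  destruct (s m) as [k|] eqn:E1.
  - symmetry. apply (agree_symbol (S (Nat.max m k)) m k s s'); auto; lia.
  - destruct (s' m) as [k|] eqn:E2; [|reflexivity].
    assert (s m = Some k) by (apply (agree_symbol (S (Nat.max m k)) m k s s'); auto; lia).
    congruence.
Qed.

Definition seq_dist (s s' : seq_space) : R :=
  match excluded_middle_informative (exists n, ~ agree n s s') with
  | left H =>
      (/2) ^ proj1_sig (ConstructiveEpsilon.epsilon_smallest _ (fun n => excluded_middle_informative _) H)
  | right _ => 0
  end.

Lemma seq_dist_cases (s s' : seq_space) :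
  (seq_dist s s' = 0%R /\ forall n, agree n s s') \/
  (exists N, seq_dist s s' = ((/2) ^ N)%R /\ ~ agree N s s' /\ forall m, m < N -> agree m s s').
Proof.
  unfold seq_dist. destruct excluded_middle_informative as [H|H].
  - right. destruct ConstructiveEpsilon.epsilon_smallest as [N [HN1 HN2]]. simpl.
    exists N. repeat split; auto. intros m Hm. apply NNPP. intros Hc. specialize (HN2 m Hc). lia.
  - left. split; [reflexivity|]. intros n. apply NNPP. intros Hc. apply H. eauto.
Qed.

Lemma half_pow_pos (n : nat) : (0 < (/2) ^ n)%R.
Proof. apply pow_lt. lra. Qed.

Lemma half_pow_lt (m n : nat) : m < n -> ((/2) ^ n < (/2) ^ m)%R.
Proof.
  intros H. induction H as [|n H IH]; simpl.
  - pose proof (half_pow_pos m). lra.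
  - pose proof (half_pow_pos n). lra.
Qed.

Lemma half_pow_small (r : R) : (0 < r)%R -> exists n, ((/2) ^ n < r)%R.
Proof.
  intros Hr. destruct (pow_lt_1_zero (/2) ltac:(rewrite Rabs_pos_eq; lra) r Hr) as [N HN].
  exists N. specialize (HN N (le_n N)). rewrite Rabs_pos_eq in HN; [exact HN|].
  left; apply half_pow_pos.
Qed.

Lemma seq_dist_lt (n : nat) (s s' : seq_space) :
  (seq_dist s s' < (/2) ^ n)%R <-> agree n s s'.
Proof.
  destruct (seq_dist_cases s s') as [[E H]|[N [E [H1 H2]]]]; rewrite E.
  - split; auto. intros; apply half_pow_pos.
  - split; intros Hn; destruct (le_lt_dec N n) as [HNn|HNn].
    + destruct (Nat.eq_dec N n) as [<-|]; [lra|].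
      pose proof (half_pow_lt N n ltac:(lia)). lra.
    + auto.
    + exfalso. apply H1. eapply agree_mono; eauto.
    + apply half_pow_lt. exact HNn.
Qed.

Lemma seq_dist_nonneg (s s' : seq_space) : (0 <= seq_dist s s')%R.
Proof.
  destruct (seq_dist_cases s s') as [[E _]|[N [E _]]]; rewrite E; [lra|].
  left; apply half_pow_pos.
Qed.

(* The triangle inequality holds in the ultrametric form
   d(s1,s3) <= max (d(s1,s2), d(s2,s3)), since agreement is transitive. *)
Lemma seq_dist_is_metric : is_metric seq_dist.
Proof.
  split; [|split; [|split]].
  - apply seq_dist_nonneg.
  - intros s s'. split.
    + intros E. apply agree_everywhere_eq. intros n. apply seq_dist_lt.
      rewrite E. apply half_pow_pos.
    + intros <-. destruct (seq_dist_cases s s) as [[E _]|[N [_ [H _]]]]; [exact E|].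
      exfalso. apply H. intros m _. reflexivity.
  - intros s s'.
    destruct (seq_dist_cases s s') as [[E H]|[N [E [H1 H2]]]],
      (seq_dist_cases s' s) as [[E' H']|[N' [E' [H1' H2']]]]; rewrite E, E'; auto.
    + exfalso. apply H1'. apply agree_sym. auto.
    + exfalso. apply H1. apply agree_sym. auto.
    + destruct (lt_eq_lt_dec N N') as [[Hl|<-]|Hl]; [| reflexivity |]; exfalso.
      * apply H1. apply agree_sym. auto.
      * apply H1'. apply agree_sym. auto.
  - intros s1 s2 s3. pose proof (seq_dist_nonneg s1 s2). pose proof (seq_dist_nonneg s2 s3).
    destruct (seq_dist_cases s1 s3) as [[E _]|[N [E [H1 _]]]]; rewrite E; [lra|].
    destruct (Rlt_or_le (seq_dist s1 s2) ((/2) ^ N)) as [Ha|Ha]; [|lra].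
    destruct (Rlt_or_le (seq_dist s2 s3) ((/2) ^ N)) as [Hb|Hb]; [|lra].
    exfalso. apply H1. apply seq_dist_lt in Ha, Hb. eapply agree_trans; eauto.
Qed.
(** Closed subsets of the sequence space are compact.  The proof is König's
   lemma: at each resolution there are finitely many agreement classes, so
   if an open cover has no finite subcover, there is a nested chain of
   agreement classes none of which is finitely covered; the chain shrinks to
   a point of the (closed) subset, and the member of the cover containing
   that point already covers one of the classes. *)

Definition closed_set (Q : seq_space -> Prop) : Prop :=
  forall z, (forall n, exists s, Q s /\ agree n z s) -> Q z.

Definition sub_dist {Q : seq_space -> Prop} (x y : {s | Q s}) : R :=
  seq_dist (proj1_sig x) (proj1_sig y).

Lemma sub_dist_is_metric (Q : seq_space -> Prop) : is_metric (@sub_dist Q).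
Proof.
  destruct seq_dist_is_metric as [Hnn [Hzero [Hsym Htri]]].
  split; [|split; [|split]]; unfold sub_dist; intros; auto.
  split; [|intros ->; apply Hzero; reflexivity].
  intros E. destruct x as [x Hx], y as [y Hy]. apply subset_eq_compat, Hzero, E.
Qed.

Lemma bounded_words_finite (k b : nat) :
  exists ws : list (list nat), forall f : nat -> nat,
    (forall m, m < k -> f m <= b) -> In (map f (seq 0 k)) ws.
Proof.
  induction k as [|k [ws Hws]].
  - exists [[]]. intros f _. left. reflexivity.
  - exists (flat_map (fun w => map (fun e => w ++ [e]) (seq 0 (S b))) ws).
    intros f Hf. rewrite seq_S, map_app. apply in_flat_map.
    exists (map f (seq 0 k)). split; [apply Hws; intros; apply Hf; lia|].
    apply in_map_iff. exists (f k). split; [reflexivity|].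
    apply in_seq. specialize (Hf k). lia.
Qed.

Definition pattern (n : nat) (s : seq_space) : list nat :=
  map (fun m => trunc (S n) (s m)) (seq 0 (S n)).

Lemma finitely_many_patterns (n : nat) :
  exists ws, forall s, In (pattern n s) ws.
Proof.
  destruct (bounded_words_finite (S n) (S n)) as [ws Hws].
  exists ws. intros s. apply Hws. intros; apply trunc_le.
Qed.

Lemma pattern_agree (n : nat) (s s' : seq_space) :
  pattern n s = pattern n s' -> agree (S n) s s'.
Proof.
  intros H m Hm.
  assert (Hnth : forall h : nat -> nat, nth m (map h (seq 0 (S n))) 0 = h m).
  { intros h. rewrite nth_indep with (d' := h 0) by (rewrite length_map, length_seq; lia).
    rewrite map_nth, seq_nth by lia. reflexivity. }
  rewrite <- (Hnth (fun m => trunc (S n) (s m))), <- (Hnth (fun m => trunc (S n) (s' m))).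
  exact (f_equal (fun w => nth m w 0) H).
Qed.

Lemma agree_chain_limit (c : nat -> seq_space) :
  (forall n, agree n (c n) (c (S n))) -> exists z, forall n, agree n z (c n).
Proof.
  intros Hch.
  assert (Hfar : forall k n, agree n (c n) (c (n + k))).
  { induction k as [|k IH]; intros n.
    - rewrite Nat.add_0_r. intros m _. reflexivity.
    - eapply agree_trans; [apply IH|]. rewrite Nat.add_succ_r.
      eapply agree_mono; [apply Hch|lia]. }
  exists (fun m =>
    match excluded_middle_informative (exists k n, m < n /\ k < n /\ c n m = Some k) with
    | left H => Some (proj1_sig (constructive_indefinite_description _ H))
    | right _ => None end).
  intros n m Hm. destruct excluded_middle_informative as [H|H].
  - destruct constructive_indefinite_description as [k [n0 [Hm0 [Hk0 E0]]]]. simpl.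
    assert (E1 : c (n0 + n) m = Some k)
      by (apply (trunc_eq_small n0 k (c n0 m)); auto; apply Hfar; exact Hm0).
    rewrite (Hfar n0 n m Hm), Nat.add_comm, E1. reflexivity.
  - simpl. symmetry. apply trunc_large. intros k Ek.
    destruct (le_lt_dec n k) as [Hk|Hk]; [exact Hk|].
    exfalso. apply H. exists k, n. auto.
Qed.

Section Compactness.
Variables (Q : seq_space -> Prop) (I : Type) (U : I -> {s | Q s} -> Prop).

Definition finitely_covered (n : nat) (x : {s | Q s}) : Prop :=
  exists l : list I, forall z : {s | Q s},
    agree n (proj1_sig x) (proj1_sig z) -> exists i, In i l /\ U i z.

(* A class at resolution n is the finite union of its subclasses at n + 1. *)
Lemma finitely_covered_of_refinements (n : nat) (x : {s | Q s}) :
  (forall y : {s | Q s}, agree n (proj1_sig x) (proj1_sig y) -> finitely_covered (S n) y) ->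
  finitely_covered n x.
Proof.
  intros Hy. destruct (finitely_many_patterns n) as [ws Hws].
  assert (Hpart : forall ws, exists l : list I, forall z : {s | Q s},
      agree n (proj1_sig x) (proj1_sig z) -> In (pattern n (proj1_sig z)) ws ->
      exists i, In i l /\ U i z).
  { induction ws0 as [|w ws' [l' Hl']]; [exists []; intros z _ []|].
    destruct (classic (exists y : {s | Q s},
      agree n (proj1_sig x) (proj1_sig y) /\ pattern n (proj1_sig y) = w))
      as [[y [Hxy Hyw]]|Hnone].
    - destruct (Hy y Hxy) as [ly Hly]. exists (ly ++ l'). intros z Hz [Hw|Hw].
      + destruct (Hly z) as [i [Hi Ui]]; [apply pattern_agree; congruence|].
        exists i. split; [apply in_or_app; left|]; auto.
      + destruct (Hl' z Hz Hw) as [i [Hi Ui]].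
        exists i. split; [apply in_or_app; right|]; auto.
    - exists l'. intros z Hz [Hw|Hw]; [exfalso; eauto|auto]. }
  destruct (Hpart ws) as [l Hl]. exists l. intros z Hz. apply Hl; auto.
Qed.

Lemma uncovered_chain (x0 : {s | Q s}) : ~ finitely_covered 0 x0 ->
  exists c : nat -> {s | Q s}, forall n,
    ~ finitely_covered n (c n) /\ agree n (proj1_sig (c n)) (proj1_sig (c (S n))).
Proof.
  intros H0.
  assert (Hstep : forall p : nat * {s | Q s}, exists y : {s | Q s},
    ~ finitely_covered (fst p) (snd p) ->
    agree (fst p) (proj1_sig (snd p)) (proj1_sig y) /\ ~ finitely_covered (S (fst p)) y).
  { intros [n x]. simpl. destruct (classic (finitely_covered n x)) as [Hc|Hc].
    - exists x. tauto.
    - assert (Hsub : ~ forall y : {s | Q s},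
        agree n (proj1_sig x) (proj1_sig y) -> finitely_covered (S n) y)
        by (intros Hall; apply Hc, finitely_covered_of_refinements, Hall).
      apply not_all_ex_not in Hsub. destruct Hsub as [y Hy].
      exists y. intros _. apply imply_to_and in Hy. exact Hy. }
  destruct (choice _ Hstep) as [f Hf].
  set (c := fix c n := match n with O => x0 | S n' => f (n', c n') end).
  assert (Hc : forall n, ~ finitely_covered n (c n))
    by (induction n; [exact H0|apply (Hf (n, c n)); exact IHn]).
  exists c. intros n. split; [apply Hc|apply (Hf (n, c n)), Hc].
Qed.

Hypothesis Q_closed : closed_set Q.

Lemma closed_set_compact_cover :
  (forall i, is_open sub_dist (U i)) -> (forall x, exists i, U i x) ->
  exists l : list I, forall x, exists i, In i l /\ U i x.
Proof.
  intros Hopen Hcov. apply NNPP. intros Hno.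
  destruct (classic (inhabited {s | Q s})) as [[x0]|Hempty];
    [|apply Hno; exists []; intros x; exfalso; exact (Hempty (inhabits x))].
  destruct (uncovered_chain x0) as [c Hc].
  { intros [l Hl]. apply Hno. exists l. intros z. apply Hl, agree_zero. }
  destruct (agree_chain_limit (fun n => proj1_sig (c n))) as [z Hz]; [apply Hc|].
  assert (Qz : Q z) by (intros; apply Q_closed; intros n; exists (proj1_sig (c n));
    split; [apply proj2_sig|apply Hz]).
  destruct (Hcov (exist Q z Qz)) as [i Ui].
  destruct (Hopen i _ Ui) as [r [Hr Hball]].
  destruct (half_pow_small r Hr) as [n Hn].
  apply (proj1 (Hc n)). exists [i]. intros y Hy. exists i. split; [left; reflexivity|].
  apply Hball. unfold sub_dist. simpl.
  assert (agree n z (proj1_sig y)) by (eapply agree_trans; [apply Hz|exact Hy]).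
  apply seq_dist_lt in H. lra.
Qed.
End Compactness.

Lemma closed_set_compact (Q : seq_space -> Prop) :
  closed_set Q -> is_compact (@sub_dist Q).
Proof. intros HQ I U. apply closed_set_compact_cover. exact HQ. Qed.
(** The shift space.  Put a_j = place 0 j = (j+1)!.  A sequence s is
   admissible when
   - (forced increments) s m = k and j >= k imply s (m + a_j) = k + 1;
   - (no double increment) if s m is oo or exceeds k, then s (m + a_j) and
     s (m + a_(j+1)) are not both k + 1;
   - (sparse small symbols) the positions carrying a symbol below K have
     Banach density zero, at least at the rate enjoyed by the factorial
     digit sum sequence.  The rate is fixed in advance so that the
     condition is closed. *)

Lemma digit_sum_density_rate (K : nat) (lam : R) : exists N, (lam < 1)%R ->
  forall a L, N <= L -> (INR (count_in (fun p => ~ (digit_sum 0 p < K)%nat) a L) >= lam * INR L)%R.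
Proof.
  destruct (Rlt_or_le lam 1) as [Hl|Hl].
  - destruct (large_digit_sum_density_one K lam Hl) as [N [_ HN]]. exists N. auto.
  - exists 0. intros Hc. lra.
Qed.

Definition density_rate (K : nat) (lam : R) : nat :=
  proj1_sig (constructive_indefinite_description _ (digit_sum_density_rate K lam)).

Lemma density_rate_spec (K : nat) (lam : R) : (lam < 1)%R -> forall a L, density_rate K lam <= L ->
  (INR (count_in (fun p => ~ (digit_sum 0 p < K)%nat) a L) >= lam * INR L)%R.
Proof. unfold density_rate. destruct constructive_indefinite_description as [N HN]. exact HN. Qed.

Definition symbol_below (s : seq_space) (K p : nat) : Prop :=
  exists k, s p = Some k /\ k < K.

Definition forced_increments (s : seq_space) : Prop :=
  forall m k j, k <= j -> s m = Some k -> s (m + place 0 j) = Some (S k).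

Definition no_double_increment (s : seq_space) : Prop :=
  forall m k j, ~ (exists k', s m = Some k' /\ k' <= k) ->
    ~ (s (m + place 0 j) = Some (S k) /\ s (m + place 0 (S j)) = Some (S k)).

Definition sparse_small_symbols (s : seq_space) : Prop :=
  forall K (lam : R), (lam < 1)%R -> forall a L, density_rate K lam <= L ->
    (INR (count_in (fun p => ~ symbol_below s K p) a L) >= lam * INR L)%R.

Definition admissible (s : seq_space) : Prop :=
  forced_increments s /\ no_double_increment s /\ sparse_small_symbols s.

(* Each condition only inspects finitely many symbols below a finite bound,
   hence passes to limits. *)
Lemma admissible_closed : closed_set admissible.
Proof.
  intros z H. split; [|split].
  - intros m k j Hk E.
    destruct (H (S (Nat.max (m + place 0 j) (S k)))) as [s [[HF _] Ha]].
    apply (agree_symbol _ _ _ z s Ha); try lia.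
    apply HF; [exact Hk|]. apply (agree_symbol _ _ _ z s Ha); auto; lia.
  - intros m k j Hn [E1 E2].
    destruct (H (S (Nat.max (Nat.max (m + place 0 j) (m + place 0 (S j))) (Nat.max m (S k)))))
      as [s [[_ [HC _]] Ha]].
    apply (HC m k j).
    + intros [k' [E Hk']]. apply Hn. exists k'. split; [|exact Hk'].
      apply (agree_symbol _ _ _ z s Ha); auto; lia.
    + split; apply (agree_symbol _ _ _ z s Ha); auto; lia.
  - intros K lam Hl a L HL.
    destruct (H (S (Nat.max (a + L) K))) as [s [[_ [_ HD]] Ha]].
    erewrite count_in_ext; [apply (HD K lam Hl a L HL)|].
    intros i Hi. unfold symbol_below.
    split; intros Hns [k [E Hk]]; apply Hns; exists k; split; auto;
      apply (agree_symbol _ _ _ z s Ha); auto; lia.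
Qed.

Definition shift (s : seq_space) : seq_space := fun m => s (S m).

Lemma admissible_shift (s : seq_space) : admissible s -> admissible (shift s).
Proof.
  intros [HF [HC HD]]. split; [|split].
  - intros m k j. apply (HF (S m) k j).
  - intros m k j. apply (HC (S m) k j).
  - intros K lam Hl a L HL. erewrite count_in_ext; [apply (HD K lam Hl (S a) L HL)|].
    intros i _. reflexivity.
Qed.

(* The shift is 2-Lipschitz, hence continuous. *)
Lemma agree_shift (n : nat) (s s' : seq_space) : agree (S n) s s' -> agree n (shift s) (shift s').
Proof.
  intros H m Hm. unfold shift.
  rewrite (trunc_trunc n (S n) (s (S m))), (trunc_trunc n (S n) (s' (S m))), H by lia.
  reflexivity.
Qed.

(* The factorial digit sum sequence: adding (j+1)! with j >= digit sum adds
   one to the digit sum, and digit_sum_no_double gives the second condition. *)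
Lemma admissible_digit_sum : admissible (fun p => Some (digit_sum 0 p)).
Proof.
  split; [|split].
  - intros m k j Hk E. injection E as <-. rewrite digit_sum_add_place by lia.
    f_equal. lia.
  - intros m k j Hn [E1 E2]. injection E1 as E1. injection E2 as E2.
    apply (digit_sum_no_double j 0 m k); [|auto].
    destruct (le_lt_dec (digit_sum 0 m) k); [|assumption].
    exfalso. apply Hn. eauto.
  - intros K lam Hl a L HL. erewrite count_in_ext; [apply (density_rate_spec K lam Hl a L HL)|].
    intros i _. unfold symbol_below. split.
    + intros H1 H2. apply H1. eauto.
    + intros H1 [k [E Hk]]. injection E as <-. exact (H1 Hk).
Qed.

Lemma admissible_infinity : admissible (fun _ => None).
Proof.
  split; [|split].
  - intros m k j _ E. discriminate.
  - intros m k j _ [E _]. discriminate.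
  - intros K lam Hl a L _. rewrite count_in_true.
    + pose proof (pos_INR L). nra.
    + intros p [k [E _]]. discriminate.
Qed.

Definition X : Type := {s | admissible s}.

Definition dX : X -> X -> R := @sub_dist admissible.

Definition TX (x : X) : X := exist _ (shift (proj1_sig x)) (admissible_shift _ (proj2_sig x)).

Lemma iter_TX (k : nat) (x : X) (m : nat) :
  proj1_sig (Nat.iter k TX x) m = proj1_sig x (k + m).
Proof.
  revert x m. induction k as [|k IH]; intros x m; [reflexivity|].
  simpl. unfold shift. rewrite IH. f_equal. lia.
Qed.

Lemma X_is_TDS : is_TDS dX TX.
Proof.
  split; [exact (inhabits (exist _ _ admissible_infinity))|].
  split; [apply sub_dist_is_metric|].
  split; [apply closed_set_compact, admissible_closed|].
  intros x eps He. destruct (half_pow_small eps He) as [n Hn].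
  exists ((/2) ^ S n)%R. split; [apply half_pow_pos|].
  intros y Hy. apply seq_dist_lt, agree_shift, seq_dist_lt in Hy. unfold dX, sub_dist. simpl. lra.
Qed.

(** Every pair of points is Banach proximal: at resolution n two points
   agree at time k as soon as neither carries a symbol below n at the
   positions k, ..., k + n - 1, and such times have Banach density one
   because small symbols are uniformly sparse. *)

Lemma count_in_window_union (G : nat -> Prop) (L n : nat) (B : R) :
  (forall b, (INR (count_in G b L) <= B)%R) ->
  forall a,
  (INR (count_in (fun k => exists t, (t < n)%nat /\ G (k + t)%nat) a L) <= INR n * B)%R.
Proof.
  intros HG a. induction n as [|n IH].
  - rewrite count_in_false by (intros p [t [Ht _]]; lia). simpl. lra.
  - assert (Hsplit : count_in (fun k => exists t, t < S n /\ G (k + t)) a L <=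
      count_in (fun k => exists t, t < n /\ G (k + t)) a L + count_in G (a + n) L).
    { transitivity (count_in (fun k => (exists t, t < n /\ G (k + t)) \/ G (k + n)) a L);
        [|etransitivity; [apply count_in_or|]].
      - apply count_in_mono. intros i _ [t [Ht Hg]].
        destruct (Nat.eq_dec t n) as [->|]; [right; exact Hg|left; exists t; split; auto; lia].
      - rewrite (count_in_ext (fun k => G (k + n)) G a (a + n));
          [reflexivity|intros i _; rewrite Nat.add_shuffle0; reflexivity]. }
    apply le_INR in Hsplit. rewrite plus_INR in Hsplit. rewrite S_INR.
    specialize (HG (a + n)). lra.
Qed.

Lemma small_symbols_sparse (s : seq_space) (K : nat) (lam : R) (b L : nat) :
  admissible s -> (lam < 1)%R -> density_rate K lam <= L ->
  (INR (count_in (symbol_below s K) b L) <= (1 - lam) * INR L)%R.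
Proof.
  intros [_ [_ HD]] Hl HL. specialize (HD K lam Hl b L HL).
  rewrite count_in_compl_INR in HD. lra.
Qed.

Lemma agree_at_large_symbols (x y : X) (n k : nat) :
  (forall t, t < n -> ~ symbol_below (proj1_sig x) n (k + t) /\
                      ~ symbol_below (proj1_sig y) n (k + t)) ->
  agree n (proj1_sig (Nat.iter k TX x)) (proj1_sig (Nat.iter k TX y)).
Proof.
  intros H m Hm. rewrite !iter_TX. destruct (H m Hm) as [Hx Hy].
  rewrite !trunc_large; [reflexivity| |];
    intros j Ej; destruct (le_lt_dec n j); auto; exfalso;
    unfold symbol_below in Hx, Hy; eauto.
Qed.

(* Resolution n >= 1 with 2^-n < eps; the times where x or y carries a
   symbol below n somewhere in the next n positions have density at most
   1 - lam by the two preceding lemmas. *)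
Lemma X_banach_proximal (x y : X) : banach_proximal dX TX x y.
Proof.
  intros eps He lam Hl.
  destruct (half_pow_small eps He) as [n0 Hn0]. set (n := S n0).
  assert (Hn : ((/2) ^ n < eps)%R) by (pose proof (half_pow_lt n0 n ltac:(lia)); lra).
  assert (HnR : (1 <= INR n)%R) by (unfold n; rewrite S_INR; pose proof (pos_INR n0); lra).
  (* each point may spoil a (1 - lam) / (2 n) share of the times *)
  set (lam' := (1 - (1 - lam) / (2 * INR n))%R).
  assert (Hl' : (lam' < 1)%R)
    by (unfold lam'; assert (0 < (1 - lam) / (2 * INR n))%R by (apply Rdiv_lt_0_compat; lra); lra).
  exists (Nat.max 1 (density_rate n lam')). split; [lia|]. intros a L HL.
  assert (Hrate : density_rate n lam' <= L)
    by (eapply Nat.le_trans; [apply Nat.le_max_r|exact HL]).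
  set (G p := symbol_below (proj1_sig x) n p \/ symbol_below (proj1_sig y) n p).
  assert (HG : forall b, (INR (count_in G b L) <= 2 * ((1 - lam') * INR L))%R).
  { intros b. pose proof (count_in_or (symbol_below (proj1_sig x) n)
      (symbol_below (proj1_sig y) n) b L) as Hor. apply le_INR in Hor. rewrite plus_INR in Hor.
    pose proof (small_symbols_sparse _ n lam' b L (proj2_sig x) Hl' Hrate).
    pose proof (small_symbols_sparse _ n lam' b L (proj2_sig y) Hl' Hrate). unfold G. lra. }
  pose proof (count_in_window_union G L n _ HG a) as Hbad.
  set (bad k := exists t, t < n /\ G (k + t)) in Hbad.
  assert (Hgood : count_in (fun k => ~ bad k) a L <=
    count_in (fun k => dX (Nat.iter k TX x) (Nat.iter k TX y) < eps)%R a L).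
  { apply count_in_mono. intros i _ Hnb.
    assert (Hag : agree n (proj1_sig (Nat.iter (a + i) TX x)) (proj1_sig (Nat.iter (a + i) TX y))).
    { apply agree_at_large_symbols. intros t Ht.
      split; intros Hs; apply Hnb; exists t; (split; [exact Ht|unfold G; tauto]). }
    apply seq_dist_lt in Hag. unfold dX, sub_dist. lra. }
  apply le_INR in Hgood. rewrite count_in_compl_INR in Hgood.
  assert (INR n * (2 * ((1 - lam') * INR L)) = (1 - lam) * INR L)%R by (unfold lam'; field; lra).
  pose proof (pos_INR L). lra.
Qed.

(** No pair of distinct points is asymptotic.  If x m = k while y m is oo or
   exceeds k, then x carries k + 1 at m + a_j and at m + a_(j+1) for every
   large j; asymptoticity would transfer both symbols to y, which the
   no-double-increment condition forbids. *)

(* The core argument, at a coordinate m with x m = k and y m oo or above k: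
   past the time M after which x and y agree at resolution k + 2, the
   lags a_j and a_(j+1) with j = max k M give the forbidden double. *)
Lemma not_asymptotic_at (x y : X) (m k : nat) :
  proj1_sig x m = Some k -> ~ (exists k', proj1_sig y m = Some k' /\ k' <= k) ->
  ~ asymptotic dX TX x y.
Proof.
  intros Ex Hy Has.
  destruct (Has ((/2) ^ S (S k))%R (half_pow_pos _)) as [M HM].
  assert (Hcopy : forall p, M <= p -> proj1_sig x p = Some (S k) -> proj1_sig y p = Some (S k)).
  { intros p Hp Ep. specialize (HM p Hp). apply seq_dist_lt in HM.
    specialize (HM 0 ltac:(lia)). rewrite !iter_TX, Nat.add_0_r in HM.
    apply (trunc_eq_small _ _ _ _ HM Ep). lia. }
  destruct (proj2_sig x) as [HF _]. destruct (proj2_sig y) as [_ [HC _]].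
  set (j := Nat.max k M).
  pose proof (place_gt j 0). pose proof (place_gt (S j) 0).
  apply (HC m k j Hy). split; apply Hcopy; try (unfold j in *; lia); apply HF; auto; unfold j; lia.
Qed.

Lemma seq_differ_at (s s' : seq_space) : s <> s' -> exists m k,
  (s m = Some k /\ ~ (exists k', s' m = Some k' /\ k' <= k)) \/
  (s' m = Some k /\ ~ (exists k', s m = Some k' /\ k' <= k)).
Proof.
  intros Hne. apply NNPP. intros Hsame. apply Hne, functional_extensionality. intros m.
  destruct (s m) as [k1|] eqn:E1, (s' m) as [k2|] eqn:E2; [|exfalso..|reflexivity].
  - destruct (lt_eq_lt_dec k1 k2) as [[H|<-]|H]; [exfalso|reflexivity|exfalso]; apply Hsame.
    + exists m, k1. left. split; [exact E1|]. intros [k' [E Hk]]. rewrite E2 in E.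
      injection E as <-. lia.
    + exists m, k2. right. split; [exact E2|]. intros [k' [E Hk]]. rewrite E1 in E.
      injection E as <-. lia.
  - apply Hsame. exists m, k1. left. split; [exact E1|]. intros [k' [E _]]. congruence.
  - apply Hsame. exists m, k2. right. split; [exact E2|]. intros [k' [E _]]. congruence.
Qed.

Lemma asymptotic_sym (x y : X) : asymptotic dX TX x y -> asymptotic dX TX y x.
Proof.
  intros Has eps He. destruct (Has eps He) as [M HM]. exists M. intros n Hn.
  unfold dX, sub_dist. destruct seq_dist_is_metric as [_ [_ [Hsym _]]].
  rewrite Hsym. apply HM, Hn.
Qed.

Lemma X_not_asymptotic (x y : X) : x <> y -> ~ asymptotic dX TX x y.
Proof.
  intros Hne Has. destruct (seq_differ_at (proj1_sig x) (proj1_sig y)) as [m [k [[Ex Hy]|[Ey Hx]]]].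
  - intros E. apply Hne. destruct x, y. simpl in E. apply subset_eq_compat, E.
  - exact (not_asymptotic_at x y m k Ex Hy Has).
  - exact (not_asymptotic_at y x m k Ey Hx (asymptotic_sym x y Has)).
Qed.

Theorem mainTheorem2 :
  exists (X : Type) (d : X -> X -> R) (T : X -> X),
    is_TDS d T /\ (exists x y : X, x <> y) /\
    banach_scrambled d T (fun _ => True).
Proof.
  pose (infinity_pt := exist admissible _ admissible_infinity : X).
  pose (digit_sum_pt := exist admissible _ admissible_digit_sum : X).
  assert (Hdistinct : infinity_pt <> digit_sum_pt)
    by (intros E; apply (f_equal (fun x => proj1_sig x 0)) in E; discriminate).
  exists X, dX, TX. split; [exact X_is_TDS|].
  split; [exists infinity_pt, digit_sum_pt; exact Hdistinct|].
  split; [exists infinity_pt, digit_sum_pt; auto|].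
  intros x y _ _ Hxy. split; [apply X_banach_proximal|apply X_not_asymptotic, Hxy].
Qed.
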